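(* Let $n\ge 1$. An element $f=(f_m)_{m\ge1}$ of $A^\infty_{fin}$ belongs to $A_{fin}[\widetilde{Sp}(\mathbb{A}^1_n)]$ if and only if $f_m\in R^m_n$ for every $m\ge 1$. Equivalently, $A_{fin}[\widetilde{Sp}(\mathbb{A}^1_n)]=R_n^\infty\cap A^\infty_{fin}$, which is the graded inverse limit $\varprojlim_m\big(R^m_n\cap A_m\big)$.
   Context: Fix $n\ge1$. For $m\ge1$ let $P_m=\mathbb{R}[x_{ij},y_{ij}]_{1\le i\le m,\,1\le j\le n}$, graded by total degree (every variable has degree 1). The symmetric group $S_m$ acts on $P_m$ by permuting the block index $i$ (simultaneously in the $x$ and $y$ variables); let $A_m=P_m^{S_m}$ be the invariants. Let $\pi_m:A_{m+1}\to A_m$ be the map setting $x_{m+1,j}=y_{m+1,j}=0$ for all $j$. Let $A^\infty_{fin}=\varprojlim_m A_m$, the inverse limit taken in the category of graded rings: its elements are finite sums of compatible families $(f_m)_m$ ($f_m\in A_m$, $\pi_m(f_{m+1})=f_m$) of homogeneous elements of a common degree. For a finite multiset $X=\{(\mathbf{x}_1,\mathbf{y}_1),\dots,(\mathbf{x}_r,\mathbf{y}_r)\}$ of points of $\mathbb{R}^n\times\mathbb{R}^n$ and $f\in A^\infty_{fin}$, put $\varphi_X(f)=f_m(\mathbf{x}_1,\mathbf{y}_1,\dots,\mathbf{x}_r,\mathbf{y}_r,0,\dots,0)$ for any $m\ge r$ (this is independent of $m$ and of the ordering). Call a pair $(\mathbf{z},\mathbf{z}')\in\mathbb{R}^n\times\mathbb{R}^n$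 degenerate if $z_j=z'_j$ for some $j$. Define $A_{fin}[\widetilde{Sp}(\mathbb{A}^1_n)]$ to be the set of $f\in A^\infty_{fin}$ such that $\varphi_{X\cup\{(\mathbf{z},\mathbf{z}')\}}(f)=\varphi_X(f)$ for every finite multiset $X$ and every degenerate pair $(\mathbf{z},\mathbf{z}')$. Use the coordinates $\eta_{ij}=y_{ij}-x_{ij}$, $\xi_{ij}=y_{ij}+x_{ij}$, so $P_m=\mathbb{R}[\eta_{ij},\xi_{ij}]$. Define $R^m_n\subseteq P_m$ to be the set of polynomials $f$ such that for every $i\in\{1,\dots,m\}$ and every $k\in\{1,\dots,n\}$, the polynomial obtained from $f$ by substituting $\eta_{ik}=0$ does not depend on any of the variables $\xi_{ij}$ ($1\le j\le n$) or $\eta_{ij}$ ($j\ne k$). Let $R_n^\infty=\varprojlim_m R^m_n$ (graded inverse limit along the same maps). *)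

From Stdlib Require Import Reals List Arith.
Import ListNotations.
Open Scope R_scope.

(* A point of (R^n x R^n)^(infinitely many blocks): x i j, y i j.
   Block index i is 0-based (block i+1 of the paper); coordinate j is
   0-based, only j < n is relevant. *)
Definition arr := nat -> nat -> R.
Definition func := arr -> arr -> R.

Inductive pexpr : Type :=
| PConst : R -> pexpr
| PX : nat -> nat -> pexpr
| PY : nat -> nat -> pexpr
| PAdd : pexpr -> pexpr -> pexpr
| PMul : pexpr -> pexpr -> pexpr.

Fixpoint peval (e : pexpr) (x y : arr) : R :=
  match e with
  | PConst r => r
  | PX i j => x i j
  | PY i j => y i j
  | PAdd a b => peval a x y + peval b x y
  | PMul a b => peval a x y * peval b x y
  end.

(* e only uses variables x_ij, y_ij with i < m, j < n, i.e. e lies in P_m *)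
Fixpoint bounded (n m : nat) (e : pexpr) : Prop :=
  match e with
  | PConst _ => True
  | PX i j => (i < m)%nat /\ (j < n)%nat
  | PY i j => (i < m)%nat /\ (j < n)%nat
  | PAdd a b => bounded n m a /\ bounded n m b
  | PMul a b => bounded n m a /\ bounded n m b
  end.

Inductive hom_expr : nat -> pexpr -> Prop :=
| hom_zero : forall d, hom_expr d (PConst 0)
| hom_const : forall r, hom_expr 0 (PConst r)
| hom_X : forall i j, hom_expr 1 (PX i j)
| hom_Y : forall i j, hom_expr 1 (PY i j)
| hom_add : forall d a b, hom_expr d a -> hom_expr d b -> hom_expr d (PAdd a b)
| hom_mul : forall d1 d2 a b, hom_expr d1 a -> hom_expr d2 b ->
    hom_expr (d1 + d2) (PMul a b).

Definition hom_poly (n m d : nat) (h : func) : Prop :=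
  exists e, bounded n m e /\ hom_expr d e /\ forall x y, h x y = peval e x y.

Definition is_perm (m : nat) (s : nat -> nat) : Prop :=
  (forall i, (i < m)%nat -> (s i < m)%nat) /\
  (forall i j, (i < m)%nat -> (j < m)%nat -> s i = s j -> i = j) /\
  (forall i, (m <= i)%nat -> s i = i).

(* S_m-invariance: h in A_m (given h in P_m) *)
Definition sym (m : nat) (h : func) : Prop :=
  forall s, is_perm m s -> forall x y,
    h (fun i j => x (s i) j) (fun i j => y (s i) j) = h x y.

(* set the variables of block m (0-based; the (m+1)-th block) to zero *)
Definition zero_block (m : nat) (x : arr) : arr :=
  fun i j => if Nat.eqb i m then 0 else x i j.

Definition compat_at (m : nat) (g : nat -> func) : Prop :=
  forall x y, g m x y = g (S m) (zero_block m x) (zero_block m y).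

(* Graded inverse limit of subsets Q m of P_m: finite sums of compatible
   families (g_m)_{m>=1} of homogeneous elements of a common degree d with
   g_m in Q m.  A family is indexed by nat; index 0 is ignored. *)
Definition graded_lim (n : nat) (Q : nat -> func -> Prop) (f : nat -> func)
  : Prop :=
  exists gs : list (nat * (nat -> func)),
    Forall (fun dg => forall m, (1 <= m)%nat ->
               hom_poly n m (fst dg) (snd dg m) /\ Q m (snd dg m) /\
               compat_at m (snd dg)) gs /\
    forall m, (1 <= m)%nat -> forall x y,
      f m x y = fold_right (fun dg acc => snd dg m x y + acc) 0 gs.

Definition in_Afin (n : nat) (f : nat -> func) : Prop :=
  graded_lim n (fun m h => sym m h) f.

(* phi_X(f), X a finite list (multiset) of pairs of points of R^n x R^n
   (points are nat -> R, only coordinates j < n matter);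
   evaluated in f_m with m = |X| + 1 >= |X|. *)
Definition zero_pt : nat -> R := fun _ => 0.

Definition phi (X : list ((nat -> R) * (nat -> R))) (f : nat -> func) : R :=
  f (S (length X))
    (fun i j => if Nat.ltb i (length X) then fst (nth i X (zero_pt, zero_pt)) j else 0)
    (fun i j => if Nat.ltb i (length X) then snd (nth i X (zero_pt, zero_pt)) j else 0).

Definition degenerate (n : nat) (z z' : nat -> R) : Prop :=
  exists j, (j < n)%nat /\ z j = z' j.

Definition in_Sp (n : nat) (f : nat -> func) : Prop :=
  in_Afin n f /\
  forall X z z', degenerate n z z' -> phi ((z, z') :: X) f = phi X f.

Definition in_eta_xi (h : func) (eta xi : arr) : R :=
  h (fun i j => (xi i j - eta i j) / 2) (fun i j => (xi i j + eta i j) / 2).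

(* R^m_n: for all i < m, k < n, after substituting eta_ik = 0 the
   polynomial does not depend on xi_ij (all j) nor eta_ij (j <> k). *)
Definition R_mem (n m : nat) (h : func) : Prop :=
  forall i k, (i < m)%nat -> (k < n)%nat ->
  forall eta xi eta' xi',
    eta i k = 0 -> eta' i k = 0 ->
    (forall i' j, i' <> i -> eta' i' j = eta i' j /\ xi' i' j = xi i' j) ->
    in_eta_xi h eta' xi' = in_eta_xi h eta xi.

From Pilot Require Import Defs.
From Stdlib Require Import Reals List Arith Lia Lra FunctionalExtensionality.
Open Scope R_scope.

(* By symmetry a degenerate pair may be put in block 0, and the compatibility maps add or
   remove empty blocks; so invariance of [phi] under adding a degenerate pair says that
   [f_m] forgets block 0 as soon as [eta_0k = 0] for some [k].  Transpositions move this to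
   every block [i], and in the coordinates [(eta, xi)] it is membership in [R^m_n].
   For the graded form: [R^m_n] is stable under the dilations [(eta, xi) -> (t eta, t xi)],
   which act on the degree-[d] component by [t ^ d]; a polynomial in [t] vanishing for all
   [t <> 0] has zero coefficients, so every homogeneous component lies in [R^m_n] too. *)

Ltac nat_cases :=
  repeat match goal with
  | |- context [Nat.eqb ?a ?b] => destruct (Nat.eqb_spec a b)
  | |- context [Nat.ltb ?a ?b] => destruct (Nat.ltb_spec a b)
  | _ : context [Nat.eqb ?a ?b] |- _ => destruct (Nat.eqb_spec a b)
  | _ : context [Nat.ltb ?a ?b] |- _ => destruct (Nat.ltb_spec a b)
  end.

Definition agree_below (m : nat) (x y x' y' : arr) : Prop :=
  forall i j, (i < m)%nat -> x i j = x' i j /\ y i j = y' i j.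

Definition scale (t : R) (x : arr) : arr := fun i j => t * x i j.

Lemma peval_agree_below n m e x y x' y' :
  Defs.bounded n m e -> agree_below m x y x' y' -> peval e x y = peval e x' y'.
Proof.
  intros Hb Hxy; induction e; simpl in *.
  - reflexivity.
  - apply (Hxy _ _ (proj1 Hb)).
  - apply (Hxy _ _ (proj1 Hb)).
  - destruct Hb; rewrite IHe1, IHe2; auto.
  - destruct Hb; rewrite IHe1, IHe2; auto.
Qed.

Lemma peval_scale d e t x y :
  hom_expr d e -> peval e (scale t x) (scale t y) = t ^ d * peval e x y.
Proof.
  induction 1; simpl; try (unfold scale; ring).
  - rewrite IHhom_expr1, IHhom_expr2; ring.
  - rewrite IHhom_expr1, IHhom_expr2, pow_add; ring.
Qed.

Definition family := list (nat * (nat -> func)).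

Definition family_ok (n : nat) (Q : nat -> func -> Prop) (gs : family) : Prop :=
  Forall (fun dg => forall m, (1 <= m)%nat ->
             hom_poly n m (fst dg) (snd dg m) /\ Q m (snd dg m) /\
             compat_at m (snd dg)) gs.

Definition wsum (w : nat -> R) (gs : family) (m : nat) : func :=
  fun x y => fold_right (fun dg acc => w (fst dg) * snd dg m x y + acc) 0 gs.

Lemma wsum_cons w dg gs m x y :
  wsum w (dg :: gs) m x y = w (fst dg) * snd dg m x y + wsum w gs m x y.
Proof. reflexivity. Qed.

Lemma family_ok_In n Q gs dg m : family_ok n Q gs -> In dg gs -> (1 <= m)%nat ->
  hom_poly n m (fst dg) (snd dg m) /\ Q m (snd dg m) /\ compat_at m (snd dg).
Proof. intros Hg Hin; exact (proj1 (Forall_forall _ gs) Hg dg Hin m). Qed.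

Lemma graded_lim_weaken n (Q Q' : nat -> func -> Prop) f :
  (forall m h, Q m h -> Q' m h) -> graded_lim n Q f -> graded_lim n Q' f.
Proof.
  intros HQ (gs & Hg & Hfs); exists gs; split; [|exact Hfs].
  revert Hg; apply Forall_impl; intros dg H m Hm.
  destruct (H m Hm) as (? & ? & ?); auto.
Qed.

Lemma graded_lim_iff n Q f : graded_lim n Q f <->
  exists gs, family_ok n Q gs /\ forall m, (1 <= m)%nat -> f m = wsum (fun _ => 1) gs m.
Proof.
  assert (Hone : forall gs m x y, wsum (fun _ => 1) gs m x y =
            fold_right (fun dg acc => snd dg m x y + acc) 0 gs).
  { intros gs m x y; unfold wsum; induction gs; simpl; [|rewrite IHgs]; ring. }
  split; intros (gs & Hg & Hf); exists gs; split; auto; intros m Hm.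
  - extensionality x; extensionality y; rewrite Hone; auto.
  - intros x y; rewrite Hf, Hone; auto.
Qed.

Lemma wsum_congr w gs m m' x y x' y' :
  (forall dg, In dg gs -> snd dg m x y = snd dg m' x' y') ->
  wsum w gs m x y = wsum w gs m' x' y'.
Proof.
  unfold wsum; induction gs as [|dg gs IH]; intros H; simpl; auto.
  rewrite (H dg), IH by (simpl; auto || (intros; apply H; simpl; auto)); reflexivity.
Qed.

Lemma wsum_reweight w c gs m x y x' y' :
  (forall dg, In dg gs -> snd dg m x' y' = c (fst dg) * snd dg m x y) ->
  wsum w gs m x' y' = wsum (fun d => w d * c d) gs m x y.
Proof.
  unfold wsum; induction gs as [|dg gs IH]; intros H; simpl; auto.
  rewrite (H dg), IH by (simpl; auto || (intros; apply H; simpl; auto)); ring.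
Qed.

Lemma wsum_weight_ext w w' gs m x y :
  (forall d, w d = w' d) -> wsum w gs m x y = wsum w' gs m x y.
Proof. intros H; unfold wsum; induction gs; simpl; [|rewrite H, IHgs]; auto. Qed.

Lemma wsum_hom_poly n m d w gs :
  (forall dg, In dg gs -> w (fst dg) = 0 \/ hom_poly n m d (snd dg m)) ->
  hom_poly n m d (wsum w gs m).
Proof.
  induction gs as [|dg gs IH]; intros H.
  - exists (PConst 0); repeat split; constructor.
  - destruct IH as (er & Hbr & Hhr & Her); [intros; apply H; simpl; auto|].
    destruct (H dg (or_introl eq_refl)) as [Hw | (e & Hb & Hh & He)].
    + exists (PAdd (PConst 0) er).
      split; [split; [exact I | exact Hbr]|]; split; [constructor; [constructor | exact Hhr]|].
      intros x y; rewrite wsum_cons, Hw, Her; simpl; ring.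
    + exists (PAdd (PMul (PConst (w (fst dg))) e) er).
      split; [split; [split; [exact I | exact Hb] | exact Hbr]|].
      split; [constructor; [apply (hom_mul 0 d); [constructor | exact Hh] | exact Hhr]|].
      intros x y; rewrite wsum_cons, He, Her; reflexivity.
Qed.

Section GradedLimit.

Variables (n : nat) (Q : nat -> func -> Prop) (f : nat -> func).
Hypothesis Hf : graded_lim n Q f.

Lemma graded_lim_agree_below m x y x' y' :
  (1 <= m)%nat -> agree_below m x y x' y' -> f m x y = f m x' y'.
Proof.
  destruct (proj1 (graded_lim_iff n Q f) Hf) as (gs & Hg & Hfs); intros Hm Hxy.
  rewrite Hfs by lia; apply wsum_congr; intros dg Hin.
  destruct (family_ok_In n Q gs dg m Hg Hin Hm) as [(e & Hb & _ & He) _].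
  rewrite !He; exact (peval_agree_below n m e x y x' y' Hb Hxy).
Qed.

Lemma graded_lim_compat m : (1 <= m)%nat -> compat_at m f.
Proof.
  destruct (proj1 (graded_lim_iff n Q f) Hf) as (gs & Hg & Hfs); intros Hm x y.
  rewrite !Hfs by lia; apply wsum_congr; intros dg Hin.
  apply (family_ok_In n Q gs dg m Hg Hin Hm).
Qed.

Lemma graded_lim_sym m :
  (forall m h, Q m h -> sym m h) -> (1 <= m)%nat -> sym m (f m).
Proof.
  destruct (proj1 (graded_lim_iff n Q f) Hf) as (gs & Hg & Hfs); intros HQ Hm s Hs x y.
  rewrite Hfs by lia; apply wsum_congr; intros dg Hin.
  apply (HQ m); [apply (family_ok_In n Q gs dg m Hg Hin Hm) | exact Hs].
Qed.

Lemma graded_lim_R_mem m :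
  (forall m h, Q m h -> R_mem n m h) -> (1 <= m)%nat -> R_mem n m (f m).
Proof.
  destruct (proj1 (graded_lim_iff n Q f) Hf) as (gs & Hg & Hfs); intros HQ Hm.
  rewrite Hfs by lia; intros i k Hi Hk eta xi eta' xi' He He' Hoff.
  apply wsum_congr; intros dg Hin.
  apply (HQ m (snd dg m) (proj1 (proj2 (family_ok_In n Q gs dg m Hg Hin Hm))) i k); auto.
Qed.

End GradedLimit.

Definition rotate_perm (m l : nat) : nat :=
  if l =? 0 then (m - 1)%nat else if l <? m then (l - 1)%nat else l.

Definition swap0 (i l : nat) : nat :=
  if l =? 0 then i else if l =? i then 0%nat else l.

Lemma rotate_perm_is_perm m : (1 <= m)%nat -> is_perm m (rotate_perm m).
Proof. intros Hm; unfold is_perm, rotate_perm; repeat split; intros; nat_cases; lia. Qed.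

Lemma swap0_is_perm m i : (i < m)%nat -> is_perm m (swap0 i).
Proof. intros Hi; unfold is_perm, swap0; repeat split; intros; nat_cases; lia. Qed.

Definition ignores_degenerate_block (n i : nat) (h : func) : Prop :=
  forall u v k, (k < n)%nat -> u i k = v i k ->
  h u v = h (zero_block i u) (zero_block i v).

Lemma in_eta_xi_diff_sum h x y :
  in_eta_xi h (fun i j => y i j - x i j) (fun i j => y i j + x i j) = h x y.
Proof. unfold in_eta_xi; f_equal; extensionality i; extensionality j; field. Qed.

Lemma R_mem_ignores_degenerate_block0 n m h :
  (1 <= m)%nat -> R_mem n m h -> ignores_degenerate_block n 0 h.
Proof.
  intros Hm HR u v k Hk Huv.
  rewrite <- (in_eta_xi_diff_sum h u v), <- (in_eta_xi_diff_sum h (zero_block 0 u)).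
  symmetry; apply (HR 0%nat k Hm Hk); unfold zero_block; simpl; try lra.
  intros i' j Hi'; nat_cases; [lia | auto].
Qed.

Lemma sym_ignores_degenerate_block n m i h :
  sym m h -> (i < m)%nat -> ignores_degenerate_block n 0 h ->
  ignores_degenerate_block n i h.
Proof.
  intros Hs Hi H0 u v k Hk Huv.
  pose proof (Hs (swap0 i) (swap0_is_perm m i Hi)) as Hswap.
  rewrite <- (Hswap u v), <- (Hswap (zero_block i u)).
  rewrite (H0 _ _ k Hk) by (unfold swap0; simpl; exact Huv).
  f_equal; extensionality l; extensionality j; unfold zero_block, swap0; nat_cases; lia || auto.
Qed.

Lemma ignores_degenerate_block0_R_mem n m h :
  sym m h -> ignores_degenerate_block n 0 h -> R_mem n m h.
Proof.
  intros Hs H0 i k Hi Hk eta xi eta' xi' He He' Hoff; unfold in_eta_xi.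
  pose proof (sym_ignores_degenerate_block n m i h Hs Hi H0) as Hblock.
  rewrite (Hblock _ _ k Hk) by (rewrite He'; lra).
  rewrite (Hblock (fun i0 j => (xi i0 j - eta i0 j) / 2) _ k Hk) by (rewrite He; lra).
  f_equal; extensionality l; extensionality j; unfold zero_block; nat_cases; auto;
    destruct (Hoff l j) as [-> ->]; auto.
Qed.

Definition pad (p : (nat -> R) * (nat -> R) -> nat -> R)
  (X : list ((nat -> R) * (nat -> R))) : arr :=
  fun i j => if i <? length X then p (nth i X (zero_pt, zero_pt)) j else 0.

Lemma nth_map_seq {A : Type} (h : nat -> A) N l d :
  (l < N)%nat -> nth l (map h (seq 0 N)) d = h l.
Proof.
  intros Hl; rewrite nth_indep with (d' := h 0%nat) by (rewrite length_map, length_seq; auto).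
  rewrite map_nth, seq_nth; auto.
Qed.

Section Degenerate.

Variables (n : nat) (f : nat -> func).
Hypothesis Hf : in_Afin n f.

Let f_agree := graded_lim_agree_below n _ f Hf.
Let f_compat := graded_lim_compat n _ f Hf.
Let f_sym m := graded_lim_sym n _ f Hf m (fun _ _ H => H).

Lemma phi_eq X : phi X f = f (S (length X)) (pad fst X) (pad snd X).
Proof. reflexivity. Qed.

Lemma in_Sp_ignores_degenerate_block0 :
  (forall X z z', degenerate n z z' -> phi ((z, z') :: X) f = phi X f) ->
  forall m, (1 <= m)%nat -> ignores_degenerate_block n 0 (f m).
Proof.
  intros HSp m Hm u v k Hk Huv.
  set (X := map (fun l => (u (S l), v (S l))) (seq 0 (m - 1))).
  assert (HX : length X = (m - 1)%nat) by (unfold X; rewrite length_map, length_seq; auto).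
  pose proof (HSp X (u 0%nat) (v 0%nat) (ex_intro _ k (conj Hk Huv))) as H.
  rewrite !phi_eq in H; simpl length in H; rewrite HX in H.
  replace (S (m - 1)) with m in H by lia.
  rewrite (f_compat m Hm u v).
  match type of H with ?L = _ => transitivity L end.
  { apply f_agree; [lia|]; intros i j Hi; unfold pad, zero_block; simpl length.
    rewrite HX; nat_cases; try lia; destruct i as [|i]; simpl; auto.
    unfold X; rewrite nth_map_seq by lia; auto. }
  rewrite H, <- (f_sym m Hm (rotate_perm m) (rotate_perm_is_perm m Hm)).
  apply f_agree; auto; intros i j Hi; unfold pad, rotate_perm, zero_block.
  rewrite HX; nat_cases; try lia; auto.
  unfold X; rewrite nth_map_seq by lia; simpl.
  replace (S (i - 1)) with i by lia; auto.
Qed.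

Lemma ignores_degenerate_block0_in_Sp :
  (forall m, (1 <= m)%nat -> ignores_degenerate_block n 0 (f m)) ->
  forall X z z', degenerate n z z' -> phi ((z, z') :: X) f = phi X f.
Proof.
  intros H0 X z z' (k & Hk & Hz); rewrite !phi_eq; simpl length.
  set (r := length X).
  rewrite (H0 (S (S r)) ltac:(lia) _ _ k Hk) by (unfold pad; simpl; exact Hz).
  rewrite (f_compat (S r)) by lia; symmetry.
  rewrite <- (f_sym (S (S r)) ltac:(lia) _ (rotate_perm_is_perm (S (S r)) ltac:(lia))).
  apply f_agree; [lia|]; intros i j Hi; unfold pad, rotate_perm, zero_block.
  destruct i as [|i]; simpl; nat_cases; try lia; rewrite ?Nat.sub_0_r; auto.
Qed.

End Degenerate.

Lemma in_Sp_iff_R_mem n f :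
  in_Afin n f -> (in_Sp n f <-> forall m, (1 <= m)%nat -> R_mem n m (f m)).
Proof.
  intros Hf; split.
  - intros [_ HSp] m Hm.
    apply ignores_degenerate_block0_R_mem; [exact (graded_lim_sym n _ f Hf m (fun _ _ H => H) Hm)|].
    exact (in_Sp_ignores_degenerate_block0 n f Hf HSp m Hm).
  - intros HR; split; [exact Hf|].
    apply (ignores_degenerate_block0_in_Sp n f Hf); intros m Hm.
    exact (R_mem_ignores_degenerate_block0 n m (f m) Hm (HR m Hm)).
Qed.

Fixpoint poly_eval (N : nat) (c : nat -> R) (t : R) : R :=
  match N with
  | O => 0
  | S N' => c O + t * poly_eval N' (fun d => c (S d)) t
  end.

Lemma poly_eval_ext N c c' t : (forall d, c d = c' d) -> poly_eval N c t = poly_eval N c' t.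
Proof.
  revert c c'; induction N; intros c c' H; simpl; auto.
  rewrite H, (IHN _ (fun d => c' (S d))); auto.
Qed.

Lemma poly_eval_add N c c' t :
  poly_eval N (fun d => c d + c' d) t = poly_eval N c t + poly_eval N c' t.
Proof. revert c c'; induction N; intros c c'; simpl; [|rewrite IHN]; ring. Qed.

Lemma poly_eval_sub N c c' t :
  poly_eval N (fun d => c d - c' d) t = poly_eval N c t - poly_eval N c' t.
Proof. revert c c'; induction N; intros c c'; simpl; [|rewrite IHN]; ring. Qed.

Lemma poly_eval_zero N t : poly_eval N (fun _ => 0) t = 0.
Proof. induction N; simpl; [|rewrite IHN]; ring. Qed.

Lemma poly_eval_monomial N k a t : (k < N)%nat ->
  poly_eval N (fun d => (if k =? d then 1 else 0) * a) t = a * t ^ k.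
Proof.
  revert k; induction N; intros k Hk; [lia|]; simpl.
  destruct k as [|k]; simpl.
  - rewrite (poly_eval_ext N _ (fun _ => 0)), poly_eval_zero by (intros; ring); ring.
  - rewrite (IHN k) by lia; ring.
Qed.

Lemma poly_eval_bounded N c :
  exists M, 0 <= M /\ forall t, Rabs t <= 1 -> Rabs (poly_eval N c t) <= M.
Proof.
  revert c; induction N; intros c.
  - exists 0; split; [lra|]; intros; simpl; rewrite Rabs_R0; lra.
  - destruct (IHN (fun d => c (S d))) as (M & HM & HB).
    exists (Rabs (c 0%nat) + M); split; [pose proof (Rabs_pos (c 0%nat)); lra|].
    intros t Ht; simpl; specialize (HB t Ht).
    eapply Rle_trans; [apply Rabs_triang|]; rewrite Rabs_mult.
    pose proof (Rabs_pos t); pose proof (Rabs_pos (poly_eval N (fun d => c (S d)) t)); nra.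
Qed.

Lemma eq0_of_Rabs_le_small a M :
  0 <= M -> (forall t, 0 < t <= 1 -> Rabs a <= t * M) -> a = 0.
Proof.
  intros HM H; destruct (Req_dec a 0) as [|Ha]; auto; exfalso.
  assert (Hp : 0 < Rabs a) by (apply Rabs_pos_lt; auto).
  set (s := Rabs a + M); set (t := Rabs a / (2 * s)).
  assert (Hs : 0 < s) by (unfold s; lra).
  assert (Hts : t * (2 * s) = Rabs a) by (unfold t; field; lra).
  assert (Ht : 0 < t <= 1) by (split; [apply Rdiv_lt_0_compat|]; unfold s in *; nra).
  specialize (H t Ht).
  assert (Rabs a * (2 * s) <= Rabs a * M) by (rewrite <- Hts at 2; nra).
  unfold s in *; nra.
Qed.

(* The constant coefficient is [O(t)] as [t -> 0]; then divide by [t] and recurse. *)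
Lemma poly_eval_coef_zero N c :
  (forall t, t <> 0 -> poly_eval N c t = 0) -> forall d, (d < N)%nat -> c d = 0.
Proof.
  revert c; induction N; intros c H d Hd; [lia|].
  assert (Hc0 : c 0%nat = 0).
  { destruct (poly_eval_bounded N (fun d => c (S d))) as (M & HM & HB).
    apply (eq0_of_Rabs_le_small _ M HM); intros t Ht.
    specialize (H t ltac:(lra)); simpl in H.
    replace (c 0%nat) with (- (t * poly_eval N (fun d => c (S d)) t)) by lra.
    rewrite Rabs_Ropp, Rabs_mult, (Rabs_right t) by lra.
    apply Rmult_le_compat_l; [lra|]; apply HB; rewrite Rabs_right; lra. }
  destruct d as [|d]; auto.
  apply (IHN (fun d => c (S d))); [|lia].
  intros t Ht; specialize (H t Ht); simpl in H; rewrite Hc0 in H.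
  destruct (Rmult_integral t (poly_eval N (fun d => c (S d)) t)); lra.
Qed.

Lemma degrees_lt (gs : family) N :
  (list_max (map fst gs) < N)%nat -> Forall (fun dg => (fst dg < N)%nat) gs.
Proof.
  intros HN; apply Forall_forall; intros dg Hin.
  assert (Hle := proj1 (list_max_le (map fst gs) _) (le_n _)).
  rewrite Forall_forall in Hle; specialize (Hle (fst dg) (in_map fst gs dg Hin)); lia.
Qed.

Definition hom_part (gs : family) (d : nat) : nat -> func :=
  wsum (fun e => if e =? d then 1 else 0) gs.

Lemma poly_eval_hom_part gs N m x y t :
  Forall (fun dg => (fst dg < N)%nat) gs ->
  poly_eval N (fun d => hom_part gs d m x y) t = wsum (pow t) gs m x y.
Proof.
  induction gs as [|dg gs IH]; intros HN.
  - apply poly_eval_zero.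
  - inversion HN; subst.
    rewrite (poly_eval_ext N _ (fun d => (if fst dg =? d then 1 else 0) * snd dg m x y
                                         + hom_part gs d m x y)) by reflexivity.
    rewrite poly_eval_add, poly_eval_monomial, IH by auto.
    rewrite wsum_cons; ring.
Qed.

Lemma wsum_hom_parts gs N m x y : Forall (fun dg => (fst dg < N)%nat) gs ->
  wsum (fun _ => 1) (map (fun d => (d, hom_part gs d)) (seq 0 N)) m x y =
  wsum (fun _ => 1) gs m x y.
Proof.
  intros HN.
  assert (Hseq : forall G k, wsum (fun _ => 1) (map (fun d => (d, G d)) (seq k N)) m x y
                             = poly_eval N (fun d => G (k + d)%nat m x y) 1).
  { clear HN; induction N as [|N IHN]; intros G k; [reflexivity|].
    cbn [seq map]; rewrite wsum_cons, IHN; cbn [poly_eval fst snd].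
    rewrite Nat.add_0_r, !Rmult_1_l; f_equal.
    apply poly_eval_ext; intros d; rewrite Nat.add_succ_r; auto. }
  rewrite Hseq; cbn [Nat.add]; rewrite (poly_eval_hom_part gs N m x y 1 HN).
  apply wsum_weight_ext; intros; apply pow1.
Qed.

Lemma wsum_scale n Q w gs m t x y : family_ok n Q gs -> (1 <= m)%nat ->
  wsum w gs m (scale t x) (scale t y) = wsum (fun d => w d * t ^ d) gs m x y.
Proof.
  intros Hg Hm; apply wsum_reweight; intros dg Hin.
  destruct (family_ok_In n Q gs dg m Hg Hin Hm) as [(e & _ & Hh & He) _].
  rewrite !He; apply peval_scale; exact Hh.
Qed.

Lemma in_eta_xi_scale h t eta xi : in_eta_xi h (scale t eta) (scale t xi) =
  h (scale t (fun i j => (xi i j - eta i j) / 2)) (scale t (fun i j => (xi i j + eta i j) / 2)).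
Proof. unfold in_eta_xi, scale; f_equal; extensionality i; extensionality j; field. Qed.

(* [R_mem] is stable under the dilation [(eta, xi) -> (t eta, t xi)], which multiplies the
   degree-[d] part by [t ^ d]; so each homogeneous part inherits it. *)
Lemma hom_part_R_mem n Q gs m d : family_ok n Q gs -> (1 <= m)%nat ->
  R_mem n m (wsum (fun _ => 1) gs m) -> R_mem n m (hom_part gs d m).
Proof.
  intros Hg Hm HR i k Hi Hk eta xi eta' xi' He He' Hoff; unfold in_eta_xi.
  set (x := fun i j => (xi i j - eta i j) / 2); set (y := fun i j => (xi i j + eta i j) / 2).
  set (x' := fun i j => (xi' i j - eta' i j) / 2); set (y' := fun i j => (xi' i j + eta' i j) / 2).
  set (N := S (Nat.max d (list_max (map fst gs)))).
  assert (HN : Forall (fun dg => (fst dg < N)%nat) gs) by (apply degrees_lt; lia).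
  assert (Hpoly : forall t, t <> 0 ->
            poly_eval N (fun e => hom_part gs e m x' y' - hom_part gs e m x y) t = 0).
  { intros t _; rewrite poly_eval_sub, !poly_eval_hom_part by exact HN.
    assert (Hscaled : forall u v, wsum (pow t) gs m u v
                                  = wsum (fun _ => 1) gs m (scale t u) (scale t v)).
    { intros u v; rewrite (wsum_scale n Q) by auto.
      apply wsum_weight_ext; intros; ring. }
    rewrite !Hscaled; unfold x, y, x', y'; rewrite <- !in_eta_xi_scale.
    rewrite (HR i k Hi Hk (scale t eta) (scale t xi)); [ring | | |]; unfold scale.
    - rewrite He; ring.
    - rewrite He'; ring.
    - intros i' j Hi'; destruct (Hoff i' j Hi') as [-> ->]; auto. }
  pose proof (poly_eval_coef_zero N _ Hpoly d ltac:(lia)); lra.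
Qed.

Lemma graded_lim_hom_parts n f : in_Afin n f ->
  (forall m, (1 <= m)%nat -> R_mem n m (f m)) ->
  graded_lim n (fun m h => R_mem n m h /\ sym m h) f.
Proof.
  intros Hf HR; destruct (proj1 (graded_lim_iff n _ f) Hf) as (gs & Hg & Hfs).
  set (N := S (list_max (map fst gs))).
  assert (HN : Forall (fun dg => (fst dg < N)%nat) gs) by (apply degrees_lt; lia).
  apply graded_lim_iff; exists (map (fun d => (d, hom_part gs d)) (seq 0 N)); split.
  - apply Forall_forall; intros dh Hin m Hm.
    apply in_map_iff in Hin; destruct Hin as (d & <- & _); simpl.
    split; [|split; [split|]].
    + apply wsum_hom_poly; intros dg Hin; destruct (Nat.eqb_spec (fst dg) d) as [<-|]; auto.
      right; apply (family_ok_In n _ gs dg m Hg Hin Hm).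
    + apply (hom_part_R_mem n _ gs m d Hg Hm); rewrite <- Hfs; auto.
    + intros s Hs x y; apply wsum_congr; intros dg Hin.
      apply (family_ok_In n _ gs dg m Hg Hin Hm); exact Hs.
    + intros x y; apply wsum_congr; intros dg Hin.
      apply (family_ok_In n _ gs dg m Hg Hin Hm).
  - intros m Hm; rewrite Hfs by exact Hm.
    extensionality x; extensionality y; symmetry; apply wsum_hom_parts; exact HN.
Qed.

Theorem proposition2p4 (n : nat) (hn : (1 <= n)%nat) :
  (forall f, in_Afin n f ->
     (in_Sp n f <-> forall m, (1 <= m)%nat -> R_mem n m (f m))) /\
  (forall f, in_Sp n f <-> (graded_lim n (fun m h => R_mem n m h) f /\ in_Afin n f)) /\
  (forall f, in_Sp n f <->
     graded_lim n (fun m h => R_mem n m h /\ sym m h) f).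
Proof.
  assert (Hfine : forall f, in_Sp n f -> graded_lim n (fun m h => R_mem n m h /\ sym m h) f).
  { intros f HS; apply graded_lim_hom_parts; [exact (proj1 HS)|].
    apply (in_Sp_iff_R_mem n f (proj1 HS)); exact HS. }
  assert (Hcoarse : forall Q f, (forall m h, Q m h -> R_mem n m h) ->
                      graded_lim n Q f -> in_Afin n f -> in_Sp n f).
  { intros Q f HQ HG HA; apply (in_Sp_iff_R_mem n f HA); intros m Hm.
    exact (graded_lim_R_mem n Q f HG m HQ Hm). }
  split; [|split]; [exact (in_Sp_iff_R_mem n) | |]; intros f; split.
  - intros HS; split; [|exact (proj1 HS)].
    apply (graded_lim_weaken n (fun m h => R_mem n m h /\ sym m h)); [tauto | apply Hfine, HS].
  - intros [HG HA]; exact (Hcoarse _ f (fun _ _ H => H) HG HA).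
  - exact (Hfine f).
  - intros HG; apply (Hcoarse _ f (fun _ _ H => proj1 H) HG).
    apply (graded_lim_weaken n (fun m h => R_mem n m h /\ sym m h)); [tauto | exact HG].
Qed.
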